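(* Let $(X_{1,\infty},f_{1,\infty},\mu_{1,\infty})$ be a metric nonautonomous dynamical system and let $\mathcal{E}$ be an admissible class for $f_{1,\infty}$. Let $k\ge1$. Then $\mathcal{E}^{[k]}$ is an admissible class for $(X^{[k]}_{1,\infty},f^{[k]}_{1,\infty})$ and \[ h_{\mathcal{E}^{[k]}}\big(f^{[k]}_{1,\infty}\big)=k\cdot h_{\mathcal{E}}(f_{1,\infty}). \]
   Context: A metric NDS consists of probability spaces $(X_n,\mathcal{A}_n,\mu_n)$, $n\ge1$, and measurable maps $f_n:X_n\to X_{n+1}$ with $f_n\mu_n=\mu_{n+1}$ (push-forward). Notation: $f_k^0=\mathrm{id}$, $f_k^n=f_{k+n-1}\circ\cdots\circ f_k$, $f_k^{-n}$ = preimage under $f_k^n$. For finite measurable partitions, $H_\mu(\mathcal{P})=-\sum_{P}\mu(P)\log\mu(P)$, $\mathcal{P}\vee\mathcal{Q}=\{P\cap Q\}$. For a sequence $\mathcal{P}_{1,\infty}=\{\mathcal{P}_n\}$ of finite measurable partitions of $X_n$: $h(f_{1,\infty};\mathcal{P}_{1,\infty})=\limsup_{n}\frac1nH_{\mu_1}(\bigvee_{i=0}^{n-1}f_1^{-i}\mathcal{P}_{i+1})$, and $h_{\mathcal{E}}(f_{1,\infty})=\sup_{\mathcal{P}_{1,\infty}\in\mathcal{E}}h(f_{1,\infty};\mathcal{P}_{1,\infty})$. $\mathcal{P}_{1,\infty}\succeq\mathcal{Q}_{1,\infty}$ means $\mathcal{P}_n$ is finer than $\mathcal{Q}_n$ for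 all $n$. For $m\ge1$, $\mathcal{P}^{\langle m\rangle}_{1,\infty}(f_{1,\infty})$ is the sequence whose $k$-th term is $\bigvee_{i=0}^{m-1}f_k^{-i}\mathcal{P}_{k+i}$. A nonempty class $\mathcal{E}$ of sequences of finite measurable partitions for $X_{1,\infty}$ is admissible if: (A) for each $\mathcal{P}_{1,\infty}\in\mathcal{E}$ there is $N$ with $\#\mathcal{P}_n\le N$ for all $n$; (B) if $\mathcal{P}_{1,\infty}\in\mathcal{E}$ and $\mathcal{P}_{1,\infty}\succeq\mathcal{Q}_{1,\infty}$ then $\mathcal{Q}_{1,\infty}\in\mathcal{E}$; (C) if $\mathcal{P}_{1,\infty}\in\mathcal{E}$ then $\mathcal{P}^{\langle m\rangle}_{1,\infty}(f_{1,\infty})\in\mathcal{E}$ for every $m\ge1$. The $k$-th power system: $X^{[k]}_{1,\infty}=\{X_{(n-1)k+1}\}_{n\ge1}$, $f^{[k]}_{1,\infty}=\{f^k_{(n-1)k+1}\}_{n\ge1}$, with measures $\{\mu_{(n-1)k+1}\}$. $\mathcal{E}^{[k]}$ is the class of all sequences $\{\mathcal{P}_{(n-1)k+1}\}_{n\ge1}$ with $\{\mathcal{P}_n\}\in\mathcal{E}$. *)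

From HB Require Import structures.
From mathcomp Require Import all_boot all_order all_algebra.
From mathcomp Require Import all_classical all_reals all_analysis.
Unset Printing Implicit Defensive.
Import Order.TTheory GRing.Theory Num.Theory.
Local Open Scope classical_set_scope.
Local Open Scope ring_scope.

Section NDS.
Context {R : realType}.

Definition is_fpartition {d} {T : measurableType d} (P : set (set T)) : Prop :=
  [/\ finite_set P,
      (forall A, P A -> measurable A /\ A !=set0),
      (forall A B, P A -> P B -> A <> B -> A `&` B = set0) &
      bigcup P id = setT].

Definition finer {T : Type} (P Q : set (set T)) : Prop :=
  forall A, P A -> exists2 B, Q B & A `<=` B.

Definition pjoin {T : Type} (P Q : set (set T)) : set (set T) :=
  [set C | exists A B, [/\ P A, Q B, C = A `&` B & C !=set0]].

Definition ppreim {T U : Type} (g : T -> U) (P : set (set U)) : set (set T) :=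
  [set C | exists2 A, P A & C = g @^-1` A /\ C !=set0].

Definition pentropy {d} {T : measurableType d} (mu : probability T R)
  (P : set (set T)) : R :=
  (\sum_(A \in P) (- (fine (mu A) * ln (fine (mu A)))))%R.

(* Indices are 0-based: the paper's X_n is X (n-1) here. *)
Variable (dX : nat -> measure_display) (X : forall n, measurableType (dX n)).

Fixpoint fcomp (f : forall n, X n -> X n.+1) (k n : nat) : X k -> X (n + k) :=
  match n return X k -> X (n + k) with
  | 0 => id
  | n'.+1 => fun x => f (n' + k) (fcomp f k n' x)
  end.

Fixpoint pjoin_iter (f : forall n, X n -> X n.+1) (P : forall n, set (set (X n)))
  (k m : nat) : set (set (X k)) :=
  match m with
  | 0 => [set setT]
  | m'.+1 => pjoin (pjoin_iter f P k m') (ppreim (fcomp f k m') (P (m' + k)))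
  end.

Definition pseq_m (f : forall n, X n -> X n.+1) (P : forall n, set (set (X n)))
  (m : nat) : forall k, set (set (X k)) := fun k => pjoin_iter f P k m.

Definition seq_finer (P Q : forall n, set (set (X n))) : Prop :=
  forall n, finer (P n) (Q n).

Definition is_fpartition_seq (P : forall n, set (set (X n))) : Prop :=
  forall n, is_fpartition (P n).

Definition admissible (f : forall n, X n -> X n.+1)
  (E : set (forall n, set (set (X n)))) : Prop :=
  [/\ E !=set0,
      (forall P, E P -> is_fpartition_seq P),
      (forall P, E P -> exists N : nat, forall n, (P n #<= `I_N)%card),
      (forall P Q, E P -> is_fpartition_seq Q -> seq_finer P Q -> E Q) &
      (forall P m, E P -> (1 <= m)%N -> E (pseq_m f P m))].

Definition hseq (mu0 : probability (X 0) R) (f : forall n, X n -> X n.+1)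
  (P : forall n, set (set (X n))) : \bar R :=
  limn_esup (fun n => ((pentropy mu0 (pjoin_iter f P 0 n)) / n%:R)%:E).

Definition hclass (mu0 : probability (X 0) R) (f : forall n, X n -> X n.+1)
  (E : set (forall n, set (set (X n)))) : \bar R :=
  ereal_sup [set hseq mu0 f P | P in E].

End NDS.

Definition is_metric_NDS {R : realType} (dX : nat -> measure_display)
  (X : forall n, measurableType (dX n)) (mu : forall n, probability (X n) R)
  (f : forall n, X n -> X n.+1) : Prop :=
  forall n, measurable_fun setT (f n) /\
    (forall A, measurable A -> mu n.+1 A = mu n (f n @^-1` A)).

(* k-th power system: X^{[k]}_n = X_{nk} (0-based) *)
Definition powX (dX : nat -> measure_display) (k : nat) : nat -> measure_display :=
  fun n => dX (n * k)%N.
Definition powXs (dX : nat -> measure_display) (X : forall n, measurableType (dX n))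
  (k : nat) : forall n, measurableType (powX dX k n) := fun n => X (n * k)%N.
Definition powf (dX : nat -> measure_display) (X : forall n, measurableType (dX n))
  (f : forall n, X n -> X n.+1) (k : nat) :
  forall n, powXs dX X k n -> powXs dX X k n.+1 :=
  fun n => fcomp dX X f (n * k)%N k.
Definition powE (dX : nat -> measure_display) (X : forall n, measurableType (dX n))
  (k : nat) (E : set (forall n, set (set (X n)))) :
  set (forall n, set (set (powXs dX X k n))) :=
  [set Q | exists2 P, E P & Q = (fun n => P (n * k)%N)].

(** The atoms of [\/_{i<m} f_a^{-i} P_{a+i}] are the classes of the relation
    "x and x' visit the same atoms of P_a, ..., P_{a+m-1}".  For the power
    system with partitions [P_{nk}], following [n] steps of [f^k] visits [nk]
    steps of [f] but only looks at every [k]-th atom, so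
    [\/_{i<nk} f^{-i} P_i] refines the power join, while with the partitions
    [P^<k>_{nk}] the power join refines [\/_{i<nk} f^{-i} P_i].  Entropy is
    monotone under refinement, so up to the factor [k] the entropy rates of the
    power system are squeezed between [limsup_n H(nk)/(nk)] and
    [limsup_n H(n)/n]; these agree because [H(n)] is nondecreasing.  The same
    two comparisons, with partitions transported along [n * k = j], show that
    [E^[k]] is admissible. *)
From Pilot Require Import Defs.
From HB Require Import structures.
From mathcomp Require Import all_boot all_order all_algebra.
From mathcomp Require Import all_classical all_reals all_analysis.
From Stdlib Require Import Eqdep_dec.
Import Order.TTheory GRing.Theory Num.Theory.
Local Open Scope classical_set_scope.
Local Open Scope ring_scope.

Lemma finer_refl {T} (P : set (set T)) : finer P P.
Proof. by move=> A PA; exists A. Qed.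

Definition same_atom {T} (P : set (set T)) (y y' : T) :=
  forall A, P A -> (A y <-> A y').

Section Itinerary.
Variables (dX : nat -> measure_display) (X : forall n, measurableType (dX n)).
Variable f : forall n, X n -> X n.+1.

Local Notation fcomp := (fcomp dX X f).
Local Notation pjoin_iter := (pjoin_iter dX X f).
Local Notation is_fpartition_seq := (is_fpartition_seq dX X).

(* Points of the disjoint union of the [X n], on which [f] becomes a single
   map: this lets us compare [fcomp] at indices that are equal but not
   convertible, such as [i * k + n * k] and [(i + n) * k]. *)
Definition shift (s : {n & X n}) : {n & X n} :=
  existT _ (projT1 s).+1 (f _ (projT2 s)).

Lemma fcomp_shift a i (x : X a) :
  existT (fun n => X n) (i + a)%N (fcomp a i x) = iter i shift (existT _ a x).
Proof. by elim: i => [|i IH] //=; rewrite -IH. Qed.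

Lemma same_atom_transport (P : forall n, set (set (X n))) a b
    (y y' : X a) (z z' : X b) :
  existT (fun n => X n) a y = existT _ b z ->
  existT (fun n => X n) a y' = existT _ b z' ->
  same_atom (P a) y y' -> same_atom (P b) z z'.
Proof.
move=> e e'; have ab : a = b by exact: (f_equal (@projT1 _ _) e).
subst b.
rewrite (inj_pair2_eq_dec _ (@eq_comparable nat) _ _ _ _ e).
by rewrite (inj_pair2_eq_dec _ (@eq_comparable nat) _ _ _ _ e').
Qed.

Definition same_itinerary (P : forall n, set (set (X n))) a m (x x' : X a) :=
  forall i, (i < m)%N ->
    same_atom (P (i + a)%N) (fcomp a i x) (fcomp a i x').

Lemma pjoin_iter_same_itinerary {P : forall n, set (set (X n))} {a m C x x'} :
  is_fpartition_seq P -> pjoin_iter P a m C -> C x -> C x' ->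
  same_itinerary P a m x x'.
Proof.
move=> fP; elim: m C => [|m IH] C /=; first by move=> _ _ _ i.
move=> [C0 [_ [J0 [A PA [-> _]] -> _]]] [C0x Ax] [C0x' Ax'] i.
rewrite ltnS leq_eqVlt => /orP[/eqP ->|im]; last exact: IH C0 J0 C0x C0x' i im.
have [_ _ disP _] := fP (m + a)%N.
move=> A' PA'; have [<-//|AA'] := pselect (A = A').
by split=> A'x; [have : (A `&` A') (fcomp a m x) | have : (A `&` A') (fcomp a m x')];
  rewrite // disP.
Qed.

Lemma pjoin_iter_same_itinerary_closed {P : forall n, set (set (X n))} {a m C x x'} :
  pjoin_iter P a m C -> C x -> same_itinerary P a m x x' -> C x'.
Proof.
elim: m C => [|m IH] C /=; first by move=> -> _ _.
move=> [C0 [_ [J0 [A PA [-> _]] -> _]]] [C0x Ax] sx; split.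
  by apply: (IH C0 J0 C0x) => i im; apply: sx; rewrite ltnS ltnW.
by have [+ _] := sx m (ltnSn m) A PA; apply.
Qed.

Lemma pjoin_iter_cover {P : forall n, set (set (X n))} a m (x : X a) :
  is_fpartition_seq P -> exists2 C, pjoin_iter P a m C & C x.
Proof.
move=> fP; elim: m => [|m [C0 J0 C0x]] /=; first by exists setT.
have [_ _ _ covP] := fP (m + a)%N.
have [A PA Ax] : bigcup (P (m + a)%N) id (fcomp a m x) by rewrite covP.
exists (C0 `&` fcomp a m @^-1` A) => //.
exists C0, (fcomp a m @^-1` A); split => //; last by exists x.
by exists A => //; split => //; exists x.
Qed.

Lemma pjoin_iter_finite (P : forall n, set (set (X n))) a m :
  is_fpartition_seq P -> finite_set (pjoin_iter P a m).
Proof.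
move=> fP; elim: m => [|m IH] /=; first exact: finite_set1.
have [finP _ _ _] := fP (m + a)%N.
apply: (@sub_finite_set _ _ ((fun p => p.1 `&` p.2) @`
  (pjoin_iter P a m `*` [set fcomp a m @^-1` A | A in P (m + a)%N]))).
  move=> _ [C [_ [JC [A PA [-> _]] -> _]]].
  by exists (C, fcomp a m @^-1` A) => //; split => //; exists A.
by apply/finite_image/finite_setX => //; exact: finite_image.
Qed.

Lemma finer_pjoin_iter (P : forall n, set (set (X n))) a m (J : set (set (X a))) :
  is_fpartition_seq P -> (forall C, J C -> C !=set0) ->
  (forall C x x', J C -> C x -> C x' -> same_itinerary P a m x x') ->
  finer J (pjoin_iter P a m).
Proof.
move=> fP neJ sJ C JC; have [x Cx] := neJ C JC.
have [D JD Dx] := pjoin_iter_cover a m x fP.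
by exists D => // x' Cx'; exact: pjoin_iter_same_itinerary_closed JD Dx (sJ _ _ _ JC Cx Cx').
Qed.

Hypothesis ne : forall n, [set: X n] !=set0.

Lemma pjoin_iter_neq0 (P : forall n, set (set (X n))) a m C :
  pjoin_iter P a m C -> C !=set0.
Proof. by case: m => [|m] /=; [move=> ->; exact: ne|move=> [? [? [_ _ _ ?]]]]. Qed.

Hypothesis mf : forall n, measurable_fun setT (f n).

Lemma measurable_fcomp a i : measurable_fun setT (fcomp a i).
Proof.
elim: i => [|i IH] /=; first exact: measurable_id.
exact: measurableT_comp (mf (i + a)%N) IH.
Qed.

Lemma pjoin_iter_measurable (P : forall n, set (set (X n))) a m C :
  is_fpartition_seq P -> pjoin_iter P a m C -> measurable C.
Proof.
move=> fP; elim: m C => [|m IH] C /=; first by move=> ->.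
move=> [C0 [_ [J0 [A PA [-> _]] -> _]]].
have [_ /(_ A PA) [mA _] _ _] := fP (m + a)%N.
apply: measurableI; first exact: IH.
by rewrite -[_ @^-1` _]setTI; apply: measurable_fcomp.
Qed.

Lemma pjoin_iter_fpartition (P : forall n, set (set (X n))) a m :
  is_fpartition_seq P -> is_fpartition (pjoin_iter P a m).
Proof.
move=> fP; split.
- exact: pjoin_iter_finite.
- move=> C JC; split; last exact: pjoin_iter_neq0 JC.
  exact: pjoin_iter_measurable JC.
- move=> C D JC JD CD; apply/seteqP; split => // y [Cy Dy]; apply: CD.
  apply/seteqP; split => z.
    by move=> Cz; apply: pjoin_iter_same_itinerary_closed JD Dy _;
      exact: pjoin_iter_same_itinerary fP JC Cy Cz.
  by move=> Dz; apply: pjoin_iter_same_itinerary_closed JC Cy _;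
    exact: pjoin_iter_same_itinerary fP JD Dy Dz.
- apply/seteqP; split => // x _.
  by have [C JC Cx] := pjoin_iter_cover a m x fP; exists C.
Qed.

Lemma pjoin_iter_finer_mono (P : forall n, set (set (X n))) a n n' :
  is_fpartition_seq P -> (n <= n')%N ->
  finer (pjoin_iter P a n') (pjoin_iter P a n).
Proof.
move=> fP nn'; apply: finer_pjoin_iter => // [C|C x x' JC Cx Cx' i ilt].
  exact: pjoin_iter_neq0.
exact: pjoin_iter_same_itinerary fP JC Cx Cx' i (leq_trans ilt nn').
Qed.

End Itinerary.

Section Entropy.
Context {R : realType} {d : measure_display} {T : measurableType d}.
Variable mu : probability T R.

Definition negxlnx (x : R) := - (x * ln x).

Lemma negxlnx_subadd (a b : R) : 0 <= a -> 0 <= b ->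
  negxlnx (a + b) <= negxlnx a + negxlnx b.
Proof.
rewrite le0r => /predU1P[->|a0]; first by rewrite add0r /negxlnx mul0r oppr0 add0r.
rewrite le0r => /predU1P[->|b0]; first by rewrite addr0 /negxlnx mul0r oppr0 addr0.
rewrite /negxlnx mulrDl opprD lerD // lerN2.
- by rewrite ler_wpM2l ?(ltW a0) // ler_ln ?posrE ?addr_gt0 // lerDl ltW.
- by rewrite ler_wpM2l ?(ltW b0) // ler_ln ?posrE ?addr_gt0 // lerDr ltW.
Qed.

Lemma negxlnx_fsum (I : choiceType) (D : set I) (F : I -> R) : finite_set D ->
  (forall i, 0 <= F i) ->
  negxlnx (\sum_(i \in D) F i) <= \sum_(i \in D) negxlnx (F i).
Proof.
move=> finD F0; rewrite !fsbig_finite //.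
elim: (finmap.enum_fset (fset_set D)) => [|i s IH].
  by rewrite !big_nil /negxlnx mul0r oppr0.
rewrite !big_cons; apply: le_trans (negxlnx_subadd _ _ (F0 i) (sumr_ge0 _ _)) _ => //.
by rewrite lerD2l.
Qed.

Lemma ler_fsum (I : choiceType) (D : set I) (F G : I -> R) : finite_set D ->
  (forall i, D i -> F i <= G i) -> \sum_(i \in D) F i <= \sum_(i \in D) G i.
Proof. by move=> finD FG; rewrite -lee_fin -!fsumEFin //; exact: lee_fsum. Qed.

Definition atoms_in (P : set (set T)) (B : set T) := P `&` [set A | A `<=` B].

Section Refinement.
Variables P Q : set (set T).
Hypotheses (fpP : is_fpartition P) (fpQ : is_fpartition Q) (PQ : finer P Q).

Lemma atoms_in_unique A B B' : P A -> Q B -> Q B' -> A `<=` B -> A `<=` B' -> B = B'.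
Proof.
have [_ _ disQ _] := fpQ; have [_ /(_ A) neP _ _] := fpP.
move=> PA QB QB' AB AB'; have [_ [x Ax]] := neP PA.
have [//|BB'] := pselect (B = B').
have : (B `&` B') x by split; [exact: AB|exact: AB'].
by rewrite disQ.
Qed.

Lemma bigcup_atoms_in B : Q B -> B = \bigcup_(A in atoms_in P B) A.
Proof.
have [_ _ _ covP] := fpP; move=> QB.
apply/seteqP; split => [x Bx|x [A [_ AB] Ax]]; last exact: AB.
have [A PA Ax] : bigcup P id x by rewrite covP.
have [B' QB' AB'] := PQ _ PA; exists A => //; split => //.
have [<-//|B'B] := pselect (B' = B).
have [_ _ disQ _] := fpQ; have : (B' `&` B) x by split=> //; exact: AB'.
by rewrite disQ.
Qed.

Lemma fsum_atoms_in (F : set T -> R) :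
  \sum_(B \in Q) \sum_(A \in atoms_in P B) F A = \sum_(A \in P) F A.
Proof.
have [finP _ _ _] := fpP; have [finQ _ _ _] := fpQ.
under eq_fsbigr => B QB do rewrite fsbig_mkcondr.
rewrite exchange_fsbig //; apply: eq_fsbigr => A; rewrite inE => PA.
have [B0 QB0 AB0] := PQ _ PA.
rewrite (fsbigD1 B0) ?inE // ifT ?inE // fsbig1 /= ?addr0 // => B [QB BB0].
rewrite ifN //; apply/negP; rewrite inE => AB; apply: BB0.
exact: atoms_in_unique PA QB QB0 AB AB0.
Qed.

Lemma pentropy_finer_le : pentropy mu Q <= pentropy mu P.
Proof.
have [finP mP disP _] := fpP.
pose m A := fine (mu A).
have finPB B : finite_set (atoms_in P B) by apply: sub_finite_set finP => A [].
have mB B : Q B -> m B = \sum_(A \in atoms_in P B) m A.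
  move=> QB; have triv : trivIset (atoms_in P B) id.
    move=> A A' [PA _] [PA' _] [x [Ax A'x]].
    have [//|AA'] := pselect (A = A').
    by have : (A `&` A') x by []; rewrite disP.
  have matoms A : atoms_in P B A -> measurable A by move=> [/mP []].
  have := measure_fin_bigcup mu (finPB B) triv matoms.
  rewrite -bigcup_atoms_in // /m => ->.
  rewrite (eq_fsbigr (fun A => (m A)%:E)) ?fsumEFin // => A.
  by rewrite inE => /matoms mA; rewrite /m fineK // fin_num_measure.
change (\sum_(B \in Q) negxlnx (m B) <= \sum_(A \in P) negxlnx (m A)).
rewrite -(fsum_atoms_in (negxlnx \o m)).
apply: ler_fsum => [|B QB]; first by have [] := fpQ.
by rewrite mB //; apply: negxlnx_fsum => // A; exact: fine_ge0.
Qed.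

End Refinement.

Lemma pentropy_ge0 (P : set (set T)) : is_fpartition P -> 0 <= pentropy mu P.
Proof.
move=> [_ mP _ _]; apply: fsumr_ge0 => A /mP [mA _].
rewrite oppr_ge0 mulr_ge0_le0 ?fine_ge0 // ln_le0 //.
by rewrite -lee_fin fineK ?fin_num_measure ?probability_le1.
Qed.

End Entropy.

Section Limsup.
Context {R : realType}.
Local Open Scope ereal_scope.

Lemma le_limn_esup_comp (u v : (\bar R)^nat) (g : nat -> nat) :
  (forall N, exists M, forall n, (M <= n)%N -> (N <= g n)%N) ->
  (exists M, forall n, (M <= n)%N -> u n <= v (g n)) ->
  limn_esup u <= limn_esup v.
Proof.
move=> g_oo [M uv]; apply: le_ereal_inf_tmp => x [V ooV <-].
have [N _ NV] : exists2 N, setT N & [set n | (N <= n)%N] `<=` V := ooV.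
have [M' HM'] := g_oo N.
apply: ge_ereal_inf; exists (ereal_sup (u @` [set n | (maxn M M' <= n)%N])).
  by exists [set n | (maxn M M' <= n)%N] => //; exists (maxn M M').
apply: ge_ereal_sup => y [n /=]; rewrite geq_max => /andP[Mn M'n] <-.
apply: le_trans (uv n Mn) _; apply: ereal_sup_ubound; exists (g n) => //.
exact/NV/HM'.
Qed.

Lemma limn_esup_pZl (u : (\bar R)^nat) (r : R) : (0 < r)%R ->
  limn_esup (fun n => r%:E * u n) = r%:E * limn_esup u.
Proof.
move=> r0; rewrite /limn_esup /limf_esup -ereal_inf_pZl //; congr ereal_inf.
apply/seteqP; split => x.
  move=> [V FV <-]; exists (ereal_sup (u @` V)); first by exists V.
  by rewrite -ereal_sup_pZl // image_comp.
by move=> [y [V FV <-] <-]; exists V => //; rewrite -ereal_sup_pZl // image_comp.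
Qed.

Lemma le_limn_esup_eps (u v : R^nat) (g : nat -> nat) :
  (forall n, 0 <= v n)%R ->
  (forall N, exists M, forall n, (M <= n)%N -> (N <= g n)%N) ->
  (forall e : R, (0 < e)%R ->
    exists M, forall n, (M <= n)%N -> (u n <= (1 + e) * v (g n))%R) ->
  limn_esup (fun n => (u n)%:E) <= limn_esup (fun n => (v n)%:E).
Proof.
move=> v0 g_oo uv.
have uvZ e : (0 < e)%R ->
    limn_esup (fun n => (u n)%:E) <= (1 + e)%:E * limn_esup (fun n => (v n)%:E).
  move=> e0; rewrite -limn_esup_pZl ?addr_gt0 //.
  apply: (le_limn_esup_comp _ _ _ g_oo); have [M HM] := uv e e0.
  by exists M => n Mn; rewrite -EFinM lee_fin; exact: HM.
have : 0 <= limn_esup (fun n => (v n)%:E).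
  apply: limf_esup_ge0 => [[N _ /(_ N (leqnn N))] //|n]; by rewrite lee_fin.
case: (limn_esup (fun n => (v n)%:E)) uvZ => [l||] //= uvZ l0; last exact: leey.
(* with [e' := e / (l + 1)] the slack [(1 + e') l] stays below [l + e] *)
apply/lee_addgt0Pr => e e0; have l1 : (0 < l + 1)%R by rewrite ltr_wpDl.
apply: le_trans (uvZ _ (divr_gt0 e0 l1)) _.
rewrite -EFinM lee_fin mulrDl mul1r lerD2l mulrAC ler_pdivrMr // ler_pM2l //.
by rewrite lerDl.
Qed.

Lemma limn_esup_rate_mul (a : R^nat) k : (0 < k)%N ->
  (forall n, 0 <= a n)%R -> {homo a : m n / (m <= n)%N >-> (m <= n)%R} ->
  limn_esup (fun n => (a (n * k)%N / n%:R)%:E) =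
  k%:R%:E * limn_esup (fun n => (a n / n%:R)%:E).
Proof.
move=> k0 a0 a_nd.
have k0R : (0 < k%:R :> R)%R by rewrite ltr0n.
have kE n : (a (n * k)%N / n%:R)%:E = k%:R%:E * (a (n * k)%N / (n * k)%:R)%:E.
  by rewrite -EFinM [in RHS]mulrC natrM invfM mulrA mulfVK ?gt_eqF.
under eq_fun do rewrite kE; rewrite limn_esup_pZl //; congr (_ * _).
apply/eqP; rewrite eq_le; apply/andP; split.
  apply: (le_limn_esup_comp _ _ (fun n => n * k)%N); last by exists 0%N.
  by move=> N; exists N => n Nn; rewrite (leq_trans Nn) // leq_pmulr.
apply: (le_limn_esup_eps _ _ (fun m => (m %/ k).+1)).
- by move=> n; rewrite divr_ge0.
- move=> N; exists (N * k)%N => m Nm.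
  by rewrite ltnW // ltnS -(mulnK N k0) leq_div2r.
(* [m <= G <= m + k] for [G := (m %/ k).+1 * k], and [k <= e m] eventually *)
move=> e e0; exists (Num.truncn (k%:R / e)).+1 => m Hm.
set G := ((m %/ k).+1 * k)%N.
have mG : (m <= G)%N by rewrite ltnW // ltn_ceil.
have Gm : (G <= m + k)%N by rewrite /G mulSn addnC leq_add2r leq_divM.
have m0N : (0 < m)%N := leq_trans (ltn0Sn _) Hm.
have m0 : (0 < m%:R :> R)%R by rewrite ltr0n.
have G0 : (0 < G%:R :> R)%R by rewrite ltr0n (leq_trans m0N mG).
have ke : (k%:R <= e * m%:R)%R.
  rewrite mulrC -ler_pdivrMr //; apply/ltW/(lt_le_trans (truncnS_gt _)).
  by rewrite ler_nat.
have GmR : (G%:R <= (1 + e) * m%:R)%R.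
  by rewrite mulrDl mul1r (le_trans (_ : _ <= (m + k)%:R)%R) ?ler_nat // natrD lerD2l.
rewrite ler_pdivrMr // mulrAC mulrCA (le_trans (a_nd _ _ mG)) //.
by rewrite ler_peMr ?a0 // ler_pdivlMr // mul1r.
Qed.

End Limsup.

Section Power.
Variables (dX : nat -> measure_display) (X : forall n, measurableType (dX n)).
Variables (f : forall n, X n -> X n.+1) (k : nat).

Local Notation fcomp := (fcomp dX X f).
Local Notation pjoin_iter := (pjoin_iter dX X f).
Local Notation pow_fcomp := (Defs.fcomp (powX dX k) (powXs dX X k) (powf dX X f k)).
Local Notation pow_pjoin_iter :=
  (Defs.pjoin_iter (powX dX k) (powXs dX X k) (powf dX X f k)).
Local Notation pow_same_itinerary :=
  (same_itinerary (powX dX k) (powXs dX X k) (powf dX X f k)).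

Lemma pow_fcomp_shift n i (x : X (n * k)%N) :
  existT (fun m => X m) ((i + n) * k)%N (pow_fcomp n i x)
  = iter (i * k) (shift dX X f) (existT _ (n * k)%N x).
Proof. by elim: i => [|i IH] //; rewrite mulSn iterD -IH -fcomp_shift. Qed.

Hypothesis k0 : (0 < k)%N.

Lemma same_itinerary_pow (P : forall n, set (set (X n))) n m (x x' : X (n * k)%N) :
  same_itinerary dX X f P (n * k) (m * k) x x' ->
  pow_same_itinerary (fun j => P (j * k)%N) n m x x'.
Proof.
move=> sx i im; apply: (same_atom_transport _ _ _ _ _ _ _ _ _ _ _ (sx _ _)).
- by rewrite fcomp_shift pow_fcomp_shift.
- by rewrite fcomp_shift pow_fcomp_shift.
- by rewrite ltn_pmul2r.
Qed.

Lemma same_itinerary_of_pow (P : forall n, set (set (X n))) b n (x x' : X (b * k)%N) :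
  is_fpartition_seq dX X P ->
  pow_same_itinerary (fun j => pjoin_iter P (j * k)%N k) b n x x' ->
  same_itinerary dX X f P (b * k) (n * k) x x'.
Proof.
move=> fP sx j jn; have lk : (j %% k < k)%N by rewrite ltn_mod.
have jkn : (j %/ k < n)%N by rewrite ltn_divLR.
have sy := sx _ jkn.
set y := pow_fcomp b (j %/ k) x in sy; set y' := pow_fcomp b (j %/ k) x' in sy.
have [C JC Cy] := pjoin_iter_cover dX X f ((j %/ k + b) * k) k y fP.
have Cy' : C y' by apply/(sy C JC).
apply: (same_atom_transport _ _ _ _ _ _ _ _ _ _ _
  (pjoin_iter_same_itinerary dX X f fP JC Cy Cy' _ lk)).
- by rewrite !fcomp_shift /y pow_fcomp_shift -iterD addnC -divn_eq.
- by rewrite !fcomp_shift /y' pow_fcomp_shift -iterD addnC -divn_eq.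
Qed.

Hypotheses (mf : forall n, measurable_fun setT (f n)) (ne : forall n, [set: X n] !=set0).

Lemma measurable_powf n : measurable_fun setT (powf dX X f k n).
Proof. exact: measurable_fcomp mf _ _. Qed.

Lemma pow_pjoin_iter_fpartition (P : forall n, set (set (X (n * k)%N))) b m :
  (forall n, is_fpartition (P n)) -> is_fpartition (pow_pjoin_iter P b m).
Proof.
apply: pjoin_iter_fpartition => [n|n]; [exact: ne|exact: measurable_powf].
Qed.

Lemma pjoin_iter_finer_pow (P : forall n, set (set (X n))) b m :
  is_fpartition_seq dX X P ->
  finer (pjoin_iter P (b * k) (m * k)) (pow_pjoin_iter (fun j => P (j * k)%N) b m).
Proof.
move=> fP; apply: finer_pjoin_iter => [j|C|C x x' JC Cx Cx']; first exact: fP.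
  by apply: pjoin_iter_neq0 => n; exact: ne.
exact/same_itinerary_pow/(pjoin_iter_same_itinerary dX X f fP JC Cx Cx').
Qed.

Lemma pow_pjoin_iter_finer (P : forall n, set (set (X n))) b n :
  is_fpartition_seq dX X P ->
  finer (pow_pjoin_iter (fun j => pjoin_iter P (j * k)%N k) b n)
    (pjoin_iter P (b * k) (n * k)).
Proof.
move=> fP; apply: (finer_pjoin_iter dX X f P (b * k) (n * k)) => //.
  by move=> C; apply: pjoin_iter_neq0 => j; exact: ne.
move=> C x x' JC Cx Cx'; apply: same_itinerary_of_pow => //.
apply: (pjoin_iter_same_itinerary _ _ (powf dX X f k) _ JC Cx Cx') => j.
exact: pjoin_iter_fpartition ne mf _ _ _ fP.
Qed.

End Power.

Section PowerAdmissible.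
Variables (dX : nat -> measure_display) (X : forall n, measurableType (dX n)).
Variables (f : forall n, X n -> X n.+1) (k : nat).
Hypothesis k0 : (0 < k)%N.

(* Only meaningful when [a = b]; the junk value [set0] is never used. *)
Definition cast_pset a b (S : set (set (X a))) : set (set (X b)) :=
  match eq_comparable a b with
  | left e => eq_rect a (fun c => set (set (X c))) S b e
  | right _ => set0
  end.

Lemma cast_pset_id a (S : set (set (X a))) : cast_pset a a S = S.
Proof.
by rewrite /cast_pset; case: (eq_comparable a a) => // e; rewrite (eq_irrelevance e erefl).
Qed.

Definition pow_extend (P : forall n, set (set (X n)))
    (Q : forall n, set (set (X (n * k)%N))) j : set (set (X j)) :=
  if (k %| j)%N then cast_pset (j %/ k * k) j (Q (j %/ k)%N) else P j.

Lemma pow_extend_mul P Q : (fun n => pow_extend P Q (n * k)%N) = Q.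
Proof.
apply: functional_extensionality_dep => n.
by rewrite /pow_extend dvdn_mull // mulnK // cast_pset_id.
Qed.

Lemma pow_extend_fpartition P Q : is_fpartition_seq dX X P ->
  (forall n, is_fpartition (Q n)) -> is_fpartition_seq dX X (pow_extend P Q).
Proof.
move=> fP fQ j; rewrite /pow_extend; case: ifP => // /divnK jk.
by move: (j %/ k)%N jk (Q _) (fQ (j %/ k)%N) => n <- S; rewrite cast_pset_id.
Qed.

Lemma finer_pow_extend P Q : (forall n, finer (P (n * k)%N) (Q n)) ->
  seq_finer dX X P (pow_extend P Q).
Proof.
move=> PQ j; rewrite /pow_extend; case: ifP => [/divnK jk|_]; last exact: finer_refl.
by move: (j %/ k)%N jk (Q _) (PQ (j %/ k)%N) => n <- S; rewrite cast_pset_id.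
Qed.

Lemma powE_coarsening {E P Q} : admissible dX X f E -> E P ->
  (forall n, is_fpartition (Q n)) -> (forall n, finer (P (n * k)%N) (Q n)) ->
  powE dX X k E Q.
Proof.
move=> [_ fE _ coarseE _] EP fQ PQ; exists (pow_extend P Q); last first.
  by rewrite pow_extend_mul.
apply: (coarseE P _ EP); first exact: pow_extend_fpartition (fE P EP) fQ.
exact: finer_pow_extend.
Qed.

Hypotheses (mf : forall n, measurable_fun setT (f n)) (ne : forall n, [set: X n] !=set0).

Lemma powE_admissible E : admissible dX X f E ->
  admissible (powX dX k) (powXs dX X k) (powf dX X f k) (powE dX X k E).
Proof.
move=> adE; have [[P0 EP0] fE boundE _ joinE] := adE; split.
- by exists (fun n => P0 (n * k)%N); exists P0.
- by move=> _ [P EP ->] n; exact: fE.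
- by move=> _ [P EP ->]; have [N PN] := boundE P EP; exists N => n; exact: PN.
- by move=> _ Q [P EP ->] fQ PQ; exact: powE_coarsening adE EP fQ PQ.
- move=> _ m [P EP ->] m1.
  apply: (powE_coarsening adE (joinE P (m * k)%N EP _)) => [|n|n].
  + by rewrite muln_gt0 m1.
  + by apply: pow_pjoin_iter_fpartition => // j; exact: fE.
  + exact: (pjoin_iter_finer_pow dX X f k k0 ne P n m (fE P EP)).
Qed.

End PowerAdmissible.

Section PowerEntropy.
Context {R : realType}.
Variables (dX : nat -> measure_display) (X : forall n, measurableType (dX n)).
Variables (mu0 : probability (X 0%N) R) (f : forall n, X n -> X n.+1) (k : nat).
Hypotheses (k0 : (0 < k)%N) (mf : forall n, measurable_fun setT (f n))
  (ne : forall n, [set: X n] !=set0).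

Local Notation pow_pjoin_iter :=
  (pjoin_iter (powX dX k) (powXs dX X k) (powf dX X f k)).
Local Notation pow_hseq := (hseq (powX dX k) (powXs dX X k) mu0 (powf dX X f k)).

Let H P n := pentropy mu0 (pjoin_iter dX X f P 0 n).

Let fpart_join := pjoin_iter_fpartition dX X f ne mf.
Let fpart_pow_join := pow_pjoin_iter_fpartition dX X f k mf ne.

Lemma hseq_limn_esup_mul P : is_fpartition_seq dX X P ->
  limn_esup (fun n => (H P (n * k)%N / n%:R)%:E) = (k%:R%:E * hseq dX X mu0 f P)%E.
Proof.
move=> fP; apply: limn_esup_rate_mul => // [n|m n mn].
  exact/pentropy_ge0/fpart_join.
apply: pentropy_finer_le; try exact: fpart_join.
exact: pjoin_iter_finer_mono.
Qed.

Lemma pow_hseq_le P : is_fpartition_seq dX X P ->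
  (pow_hseq (fun n => P (n * k)%N) <= k%:R%:E * hseq dX X mu0 f P)%E.
Proof.
move=> fP; rewrite -hseq_limn_esup_mul //.
apply: (le_limn_esup_comp _ _ id); first by move=> N; exists N.
exists 0%N => n _; rewrite lee_fin ler_wpM2r ?invr_ge0 //.
apply: pentropy_finer_le.
- exact: fpart_join.
- by apply: fpart_pow_join => j; exact: fP.
- exact: (pjoin_iter_finer_pow dX X f k k0 ne P 0 n fP).
Qed.

Lemma pow_hseq_ge P : is_fpartition_seq dX X P ->
  (k%:R%:E * hseq dX X mu0 f P <= pow_hseq (fun n => pseq_m dX X f P k (n * k)%N))%E.
Proof.
move=> fP; rewrite -hseq_limn_esup_mul //.
apply: (le_limn_esup_comp _ _ id); first by move=> N; exists N.
exists 0%N => n _; rewrite lee_fin ler_wpM2r ?invr_ge0 //.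
apply: pentropy_finer_le.
- exact: (fpart_pow_join _ 0 n (fun j => fpart_join _ _ _ fP)).
- exact: fpart_join.
- exact: (pow_pjoin_iter_finer dX X f k k0 mf ne P 0 n fP).
Qed.

End PowerEntropy.

Theorem mainTheorem2 (R : realType) (dX : nat -> measure_display)
  (X : forall n, measurableType (dX n)) (mu : forall n, probability (X n) R)
  (f : forall n, X n -> X n.+1) (E : set (forall n, set (set (X n)))) (k : nat) :
  is_metric_NDS dX X mu f -> admissible dX X f E -> (1 <= k)%N ->
  admissible (powX dX k) (powXs dX X k) (powf dX X f k) (powE dX X k E) /\
  hclass (powX dX k) (powXs dX X k) (mu 0%N) (powf dX X f k) (powE dX X k E)
    = ((k%:R)%:E * hclass dX X (mu 0%N) f E)%E.
Proof.
move=> NDS adE k0.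
have mf n : measurable_fun setT (f n) by case: (NDS n).
have ne n : [set: X n] !=set0.
  apply/set0P/negP => /eqP X0; have := probability_setT (mu n).
  by rewrite X0 measure0 => /eqP; rewrite eq_sym eqe oner_eq0.
split; first exact: powE_admissible.
have [_ fE _ _ joinE] := adE.
apply/eqP; rewrite eq_le; apply/andP; split.
  apply: ge_ereal_sup => _ [_ [P EP ->] <-].
  apply: le_trans (pow_hseq_le dX X (mu 0%N) f k k0 mf ne P (fE P EP)) _.
  by rewrite lee_wpmul2l ?lee_fin ?ler0n //; apply: ereal_sup_ubound; exists P.
rewrite /hclass -ereal_sup_pZl ?ltr0n //.
apply: ge_ereal_sup => _ [_ [P EP <-] <-].
apply: le_trans (pow_hseq_ge dX X (mu 0%N) f k k0 mf ne P (fE P EP)) _.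
apply: ereal_sup_ubound; exists (fun n => pseq_m dX X f P k (n * k)%N) => //.
by exists (pseq_m dX X f P k) => //; exact: joinE.
Qed.
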